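(* Assume the transversality condition holds at $(t^*,\bm x^* )\in I\times S$, and that PWS solutions $\bm x(t;\bm y,s)$ are Lipschitz continuous in the initial data. Then there exists $\epsilon>0$ such that for all $\bm y\in K^\epsilon_-:=\bar B_\epsilon(\bm x^* )\cap S$ and $(t,s)\in J^\epsilon_-:=\{(t,s)\in[t^*-\epsilon,t^*]^2: t<s\}$, the trajectory $\bm x(t;\bm y,s)$ has no transition in $[t^*-\epsilon,s)$. Furthermore, let $$M^\epsilon_-=\tfrac12\sup_{(t,s)\in J^\epsilon_-,\ \bm y\in K^\epsilon_-}\big|\dot{\bm x}(t)\cdot H_g(\bm x(t))\dot{\bm x}(t)+\nabla g(\bm x(t))\cdot\ddot{\bm x}(t)\big|,$$ with $\bm x(t)=\bm x(t;\bm y,s)$. If $\max\big(t^*-\epsilon-s,\ -\alpha_S^2/M^\epsilon_-\big)<t-s<0$, then $g(\bm x(t;\bm y,s))<0$.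
   Context: Setting: $I$ bounded open interval, $U\subset\mathbb R^d$ bounded open, switching function $g\in C^2$ with $\nabla g\ne0$, $S=\{g=0\}$, $U_\pm=\{\pm g>0\}$; PWS system $\dot{\bm x}=\bm f_\pm(t,\bm x)$ on $U_\pm$, $\bm f_\pm\in C^1(I\times(U_\pm\cup S)\to\mathbb R^d)$. Transversality: nonzero $\alpha_S$ with $\nabla g(\bm x^* )\cdot\bm f_\pm(t^*,\bm x^* )\ge\alpha_S^2$ on $I\times S$. Solutions satisfy (H1) finitely many transition times; (H2) one-sided limits of $\dot{\bm x}$ at a transition equal $\bm f_\pm$ on the side in $U_\pm$; (H3) $\bm x$ is $C^2$ with bounded $\ddot{\bm x}$ away from transitions. $\bm x(t;\bm y,s)$ denotes the PWS solution with $\bm x(s)=\bm y$ (for $\bm y\in S$ and $t<s$ it evolves backward by $\bm f_-$). $H_g$ is the Hessian of $g$. *)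

From HB Require Import structures.
From mathcomp Require Import all_boot all_order all_algebra.
From mathcomp Require Import all_classical all_reals all_analysis.
Set Implicit Arguments. Unset Strict Implicit. Unset Printing Implicit Defensive.
Import Order.TTheory GRing.Theory Num.Theory.
Import numFieldNormedType.Exports.
Local Open Scope classical_set_scope.
Local Open Scope ring_scope.

Section PWS.
Context {R : realType} {d : nat}.
Local Notation vec := 'rV[R]_d.

Definition dotv (u v : vec) : R := \sum_(i < d) u ord0 i * v ord0 i.

Definition ev (i : 'I_d) : vec := delta_mx 0 i.

Definition grad (g : vec -> R) (x : vec) : vec := \row_i 'D_(ev i) g x.
Definition hess (g : vec -> R) (x : vec) : 'M[R]_d :=
  \matrix_(i, j) 'D_(ev j) ('D_(ev i) g) x.

Definition C2_on (U : set vec) (g : vec -> R) : Prop :=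
  forall x, U x ->
    [/\ {for x, continuous g},
        forall i, derivable g x (ev i) /\ {for x, continuous ('D_(ev i) g)} &
        forall i j, derivable ('D_(ev i) g) x (ev j) /\
                    {for x, continuous ('D_(ev j) ('D_(ev i) g))}].

Definition C1_on (O : set (R * vec)) (F : R * vec -> vec) : Prop :=
  forall p, O p ->
    [/\ {for p, continuous F},
        derivable F p (1, 0) /\ {for p, continuous ('D_(1, 0) F)} &
        forall i, derivable F p (0, ev i) /\ {for p, continuous ('D_(0, ev i) F)}].

(* f : I x D -> R^d is C^1 on I x D (D not necessarily open): it is the
   restriction to I x D of a C^1 function on an open neighbourhood of I x D. *)
Definition C1_on_closure (I : set R) (D : set vec) (f : R -> vec -> vec) : Prop :=
  exists (O : set (R * vec)) (F : R * vec -> vec),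
    [/\ open O, (forall t x, I t -> D x -> O (t, x)), C1_on O F &
        forall t x, I t -> D x -> F (t, x) = f t x].

Definition Ssurf (U : set vec) (g : vec -> R) : set vec := [set x | U x /\ g x = 0].
Definition Uplus (U : set vec) (g : vec -> R) : set vec := [set x | U x /\ 0 < g x].
Definition Uminus (U : set vec) (g : vec -> R) : set vec := [set x | U x /\ g x < 0].

Definition transitions (I : set R) (U : set vec) (g : vec -> R) (x : R -> vec) : set R :=
  [set t | I t /\ Ssurf U g (x t)].

Definition pws_solution (I : set R) (U : set vec) (g : vec -> R)
    (fp fm : R -> vec -> vec) (x : R -> vec) : Prop :=
  let T := transitions I U g x in
  [/\
      forall t, I t -> U (x t) /\ {for t, continuous x},
      forall t, I t -> ~ T t ->
        derivable x t 1 /\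
        ((Uplus U g (x t) -> derive1 x t = fp t (x t)) /\
         (Uminus U g (x t) -> derive1 x t = fm t (x t))),
      finite_set T,
      (forall tau, T tau ->
        [/\ (\forall t \near tau^'-, Uplus U g (x t)) ->
              derive1 x t @[t --> tau^'-] --> fp tau (x tau),
            (\forall t \near tau^'-, Uminus U g (x t)) ->
              derive1 x t @[t --> tau^'-] --> fm tau (x tau),
            (\forall t \near tau^'+, Uplus U g (x t)) ->
              derive1 x t @[t --> tau^'+] --> fp tau (x tau) &
            (\forall t \near tau^'+, Uminus U g (x t)) ->
              derive1 x t @[t --> tau^'+] --> fm tau (x tau)]) &
      (forall t, I t -> ~ T t ->
         derivable (derive1 x) t 1 /\ {for t, continuous (derive1 (derive1 x))}) /\
      (exists B : R, forall t, I t -> ~ T t -> `|derive1 (derive1 x) t| <= B)].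

Definition second_deriv_g (g : vec -> R) (x : R -> vec) (t : R) : R :=
  dotv (derive1 x t) (derive1 x t *m (hess g (x t))^T) + dotv (grad g (x t)) (derive1 (derive1 x) t).

End PWS.

From HB Require Import structures.
From mathcomp Require Import all_boot all_order all_algebra.
From mathcomp Require Import all_classical all_reals all_analysis.
From mathcomp Require Import ring lra.
Import Order.TTheory GRing.Theory Num.Theory.
Import numFieldNormedType.Exports.
Local Open Scope classical_set_scope.
Local Open Scope ring_scope.

(* Transversality at (ts, xs) gives grad g(xs) . f_-(ts, xs) > 0.
   Since only partial derivatives of g are available, increments of g are
   computed coordinate by coordinate (a staircase mean value theorem), and so
   are increments of trajectories; this produces "mixed" sums in which every
   coordinate term is evaluated at its own point.  By continuity such mixed
   sums stay positive on a small box around (ts, xs): a transversal window.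
   Now take y on S near xs, a start time s of the window, and the trajectory
   x(.) = x(.; y, s).  Just before s it lies in the negative half ball
   {g < 0} near xs, and this is an open condition along the trajectory.  If
   it left the half ball somewhere in [ts - eps, s), consider the last time
   t0 where it is outside.  On ]t0, s[ the trajectory follows f_-, so the
   mean value theorem keeps x(t0) in the ball and, by transversality,
   g(x(t0)) < g(x(s)) = g(y) = 0: x(t0) is inside after all.  Hence the
   trajectory stays in {g < 0} on [ts - eps, s), which gives both claims (the
   second one only uses that t lies in [ts - eps, s)). *)

Section MatrixNorm.
Context {R : realType} {m n : nat}.

Lemma mxnorm_entry (M : 'M[R]_(m, n)) i j : `|M i j| <= `|M|.
Proof.
rewrite [leRHS]/Num.Def.normr /= mx_normrE.
by apply: le_trans; last exact: (le_bigmax _ _ (i, j)).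
Qed.

Lemma mxnorm_le (M : 'M[R]_(m, n)) e : 0 <= e ->
  (forall i j, `|M i j| <= e) -> `|M| <= e.
Proof.
move=> e0 H; rewrite [leLHS]/Num.Def.normr /= mx_normrE.
by apply: bigmax_le => // -[i j] _; exact: H.
Qed.

Lemma entry_dist (M N : 'M[R]_(m, n)) i j : `|M i j - N i j| <= `|M - N|.
Proof. by have := mxnorm_entry (M - N) i j; rewrite !mxE. Qed.

End MatrixNorm.

Section MeanValue.
Context {R : realType}.

Definition betweenr (z y w : R) := (z <= w <= y) \/ (y <= w <= z).

Lemma betweenr_dist (c z y w rho : R) : betweenr z y w ->
  `|c - z| <= rho -> `|c - y| <= rho -> `|c - w| <= rho.
Proof.
rewrite !ler_norml => H /andP[h1 h2] /andP[h3 h4].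
by case: H => /andP[h5 h6]; apply/andP; split; lra.
Qed.

Section Line.
Context {V : normedModType R}.

Lemma line_is_derive (g : V -> R) p v t :
  derivable g (p + t *: v) v ->
  is_derive t 1 (fun u => g (p + u *: v)) ('D_v g (p + t *: v)).
Proof.
move=> dg.
have E : (fun h : R => h^-1 *: (((fun u => g (p + u *: v)) \o shift t) (h *: 1)
            - g (p + t *: v))) =
         (fun h : R => h^-1 *: ((g \o shift (p + t *: v)) (h *: v) - g (p + t *: v))).
  apply: funext => h /=; congr (_ *: (g _ - _)).
  by rewrite /= [h *: 1]mulr1 scalerDl addrCA addrC.
by split; [rewrite /derivable E | rewrite /derive E].
Qed.

Lemma line_mvt_ge0 (g : V -> R) p v h : 0 <= h ->
  (forall t, 0 <= t <= h ->
     derivable g (p + t *: v) v /\ {for p + t *: v, continuous g}) ->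
  exists t, 0 <= t <= h /\ g (p + h *: v) - g p = h * 'D_v g (p + t *: v).
Proof.
move=> h0 H.
have line_cont : continuous (fun u : R => p + u *: v).
  change (continuous ((fun=> p) + (fun u : R => u *: v))).
  by move=> u; apply: continuousD; [exact: cst_continuous|exact: scalel_continuous].
have D1 x : x \in `]0, h[ ->
    is_derive x 1 (fun u : R => g (p + u *: v)) ('D_v g (p + x *: v)).
  rewrite in_itv /= => /andP[x0 xh].
  by apply: line_is_derive; apply: (fun hx => (H x hx).1); rewrite !ltW.
have C1 : {within `[0, h], continuous (fun u : R => g (p + u *: v))}.
  apply: continuous_in_subspaceT => x; rewrite inE /= in_itv /= => /H[_ gc].
  exact: continuous_comp (line_cont x) gc.
have [c cI E] := MVT_segment h0 D1 C1.
exists c; split; first by move: cI; rewrite in_itv.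
by move: E; rewrite scale0r addr0 subr0 mulrC.
Qed.

(* Mean value theorem along a segment of either orientation; the negative
   case is the positive one read from the other endpoint. *)
Lemma line_mvt (g : V -> R) p v h :
  (forall t, betweenr 0 h t ->
     derivable g (p + t *: v) v /\ {for p + t *: v, continuous g}) ->
  exists t, betweenr 0 h t /\ g (p + h *: v) - g p = h * 'D_v g (p + t *: v).
Proof.
move=> H; have [h0|h0] := leP 0 h.
  have [t [ht E]] := @line_mvt_ge0 g p v h h0 (fun t ht => H t (or_introl ht)).
  by exists t; split => //; left.
pose q := p + h *: v.
have qE t : q + t *: v = p + (h + t) *: v by rewrite /q scalerDl addrA.
have nh : 0 <= - h by rewrite oppr_ge0 ltW.
have Hq t : 0 <= t <= - h ->
    derivable g (q + t *: v) v /\ {for q + t *: v, continuous g}.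
  by move=> /andP[t0 th]; rewrite qE; apply: H; right; apply/andP; split; lra.
have [t [/andP[t0 th] E]] := @line_mvt_ge0 g q v (- h) nh Hq.
exists (h + t); split; first by right; apply/andP; split; lra.
by rewrite -qE; move: E; rewrite /q scaleNr addrK => E; apply: oppr_inj; rewrite opprB E mulNr.
Qed.

End Line.
End MeanValue.

Section Coordinates.
Context {R : realType} {d : nat}.
Local Notation vec := 'rV[R]_d.

Definition in_box (z y w : vec) := forall j, betweenr (z ord0 j) (y ord0 j) (w ord0 j).

Definition stair (z y : vec) (k : nat) : vec :=
  \row_j (if (j < k)%N then y ord0 j else z ord0 j).

Lemma stair_move (z y : vec) (k : 'I_d) t j :
  (stair z y k + t *: ev k) ord0 j =
    if (j < k)%N then y ord0 j else if j == k then z ord0 j + t else z ord0 j.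
Proof.
rewrite !mxE /=; have [jk|jk|/val_inj ->] := ltngtP j k; last by rewrite eqxx mulr1.
  have /negbTE -> : j != k by rewrite neq_ltn jk.
  by rewrite mulr0 addr0.
have /negbTE -> : j != k by rewrite neq_ltn jk orbT.
by rewrite mulr0 addr0.
Qed.

Lemma stairS (z y : vec) (k : 'I_d) :
  stair z y k.+1 = stair z y k + (y ord0 k - z ord0 k) *: ev k.
Proof.
apply/rowP => j; rewrite stair_move mxE ltnS leq_eqVlt.
have [jk|jk|/val_inj ->] := ltngtP j k; rewrite ?orbT //; last by rewrite !eqxx addrC subrK.
by have /negbTE -> : j != k by rewrite neq_ltn jk orbT.
Qed.

Lemma stair_in_box (z y : vec) (k : 'I_d) t :
  betweenr 0 (y ord0 k - z ord0 k) t -> in_box z y (stair z y k + t *: ev k).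
Proof.
move=> ht j; rewrite stair_move /betweenr.
case: ifP => _; first by case: (leP (z ord0 j) (y ord0 j)) => ? ; [left|right];
  rewrite lexx ?andbT // ltW.
case: ifP => [/eqP ->|_]; last by case: (leP (z ord0 j) (y ord0 j)) => ?; [left|right];
  rewrite lexx // ltW.
by case: ht => /andP[t0 th]; [left|right]; apply/andP; split; lra.
Qed.

(* Coordinatewise mean value theorem for a scalar field with partial
   derivatives: walking along the staircase, the increment of g splits into
   a sum of partial derivatives evaluated at points of the box. *)
Lemma partials_mvt (g : vec -> R) (z y : vec) :
  (forall w, in_box z y w -> (forall k, derivable g w (ev k)) /\ {for w, continuous g}) ->
  exists xi : 'I_d -> vec, (forall k, in_box z y (xi k)) /\
    g y - g z = \sum_(k < d) (y ord0 k - z ord0 k) * 'D_(ev k) g (xi k).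
Proof.
move=> H.
have step (k : 'I_d) : exists xi, in_box z y xi /\
    g (stair z y k.+1) - g (stair z y k) = (y ord0 k - z ord0 k) * 'D_(ev k) g xi.
  have [t [ht E]] := @line_mvt _ _ g (stair z y k) (ev k) (y ord0 k - z ord0 k)
    (fun t ht => let: conj dg cg := H _ (@stair_in_box z y k t ht) in conj (dg k) cg).
  by exists (stair z y k + t *: ev k); split; [exact: stair_in_box | rewrite stairS E].
have /fin_all_exists [xi Hxi] := step.
exists xi; split; first by move=> k; case: (Hxi k).
have -> : g y - g z = g (stair z y d) - g (stair z y 0).
  by congr (g _ - g _); apply/rowP => j; rewrite mxE ?ltn_ord.
rewrite -(@telescope_sumr _ 0 d (fun k => g (stair z y k)) (leq0n d)) big_mkord.
by apply: eq_bigr => k _; case: (Hxi k).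
Qed.

Lemma coord_mvt (x : R -> vec) u1 u2 k : u1 < u2 ->
  (forall t, u1 < t < u2 -> derivable x t 1) ->
  (forall t, u1 <= t <= u2 -> {for t, continuous x}) ->
  exists2 c, u1 < c < u2 &
    x u2 ord0 k - x u1 ord0 k = (derive1 x c) ord0 k * (u2 - u1).
Proof.
move=> u12 dx cx.
have D1 t : t \in `]u1, u2[ ->
    is_derive t 1 (fun s => x s ord0 k) ((derive1 x t) ord0 k).
  rewrite in_itv /= => /dx dxt.
  apply: DeriveDef; first by move/derivable_mxP : dxt; apply.
  by rewrite derive1E (derive_mx dxt) mxE.
have C1 : {within `[u1, u2], continuous (fun s => x s ord0 k)}.
  apply: continuous_in_subspaceT => t; rewrite inE /= in_itv /= => /cx xt.
  exact: continuous_comp xt (@coord_continuous R 1 d ord0 k (x t)).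
have [c cI E] := MVT u12 D1 C1.
by exists c => //; move: cI; rewrite in_itv.
Qed.

End Coordinates.

Section LastFailure.
Context {R : realType}.

(* If P holds just before s, is open on [lo, s), and fails at tau, then there
   is a last failure time t0 in [tau, s): P fails at t0 but holds on ]t0, s[.
   (t0 is the supremum of the failure times in [lo, s).) *)
Lemma last_failure (P : R -> Prop) (lo s tau : R) :
  lo <= tau < s -> ~ P tau ->
  (\forall u \near s^'-, P u) ->
  (forall t, lo <= t < s -> P t -> \forall u \near t, P u) ->
  exists t0, [/\ lo <= t0 < s, ~ P t0 & forall u, t0 < u < s -> P u].
Proof.
move=> /andP[lot taus] nPtau; rewrite near_withinE => /nbhs_ballP[e /= e0 He] Popen.
have Pleft (u : R) : s - e < u < s -> P u.
  move=> /andP[u1 u2]; apply: He (u2); rewrite -ball_normE /= gtr0_norm ?subr_gt0 //.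
  by rewrite ltrBlDl -ltrBlDr.
pose fails := [set u | lo <= u < s /\ ~ P u].
have fails_tau : fails tau by split => //; rewrite lot taus.
have fails_ub : ubound fails (s - e).
  move=> u [/andP[_ us] nPu]; rewrite leNgt; apply/negP => ue.
  by apply: nPu; apply: Pleft; rewrite ue us.
have fails_sup : has_sup fails by split; [exists tau | exists (s - e)].
have tau_t0 : tau <= sup fails := sup_upper_bound fails_sup fails_tau.
have t0_se : sup fails <= s - e := ge_sup (ex_intro _ tau fails_tau) fails_ub.
have t0_win : lo <= sup fails < s by apply/andP; split; lra.
exists (sup fails); split => //.
- move=> /(Popen _ t0_win) /nbhs_ballP[e2 /= e20 He2].
  have [u fu ut] := sup_adherent e20 fails_sup.
  have u_t0 := sup_upper_bound fails_sup fu.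
  by apply: fu.2; apply: He2; rewrite -ball_normE /= ger0_norm ?subr_ge0 //; lra.
- move=> u /andP[t0u us]; apply: contrapT => nPu.
  have u_win : lo <= u < s by apply/andP; split; lra.
  have := sup_upper_bound fails_sup (conj u_win nPu); lra.
Qed.

End LastFailure.

Section Transversality.
Context {R : realType} {d : nat}.
Local Notation vec := 'rV[R]_d.

Lemma perturbed_sum_gt0 (A B : 'I_d -> R) : 0 < \sum_(k < d) B k * A k ->
  exists2 eta, 0 < eta & forall a b : 'I_d -> R,
    (forall k, `|a k - A k| <= eta) -> (forall k, `|b k - B k| <= eta) ->
    0 < \sum_(k < d) b k * a k.
Proof.
set c := \sum_(k < d) _ => c0.
pose S := \sum_(k < d) (`|A k| + `|B k| + 1).
have S0 : 0 <= S by apply: sumr_ge0 => k _; rewrite !addr_ge0.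
pose eta := Num.min 1 (c / (S + 1)).
have S10 : 0 < S + 1 by rewrite ltr_wpDl.
have eta0 : 0 < eta by rewrite lt_min ltr01 divr_gt0.
have eta1 : eta <= 1 by rewrite ge_min lexx.
have etac : eta <= c / (S + 1) by rewrite ge_min lexx orbT.
exists eta => // a b ha hb.
have err x y : `|y| <= eta -> - (x * y) <= `|x| * eta.
  move=> hy; apply: le_trans (ler_norm _) _; rewrite normrN normrM.
  exact: ler_wpM2l.
have term k : B k * A k - b k * a k <= eta * (`|A k| + `|B k| + 1).
  have -> : B k * A k - b k * a k =
      - (B k * (a k - A k)) + - (A k * (b k - B k)) + - ((b k - B k) * (a k - A k)).
    by ring.
  have h1 := err (B k) _ (ha k).
  have h2 := err (A k) _ (hb k).
  have h3 := err (b k - B k) _ (ha k).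
  have h4 : `|b k - B k| * eta <= eta * 1.
    by rewrite mulrC; apply: ler_wpM2l; [exact: ltW | exact: le_trans (hb k) eta1].
  rewrite !mulrDr; lra.
have gap : c - \sum_(k < d) b k * a k <= eta * S.
  by rewrite -sumrB /S mulr_sumr; apply: ler_sum => k _; exact: term.
have etaS : eta * S < c.
  apply: le_lt_trans (_ : c / (S + 1) * S < c); first exact: ler_wpM2r.
  rewrite -mulrA gtr_pMr // mulrC ltr_pdivrMr // mul1r; lra.
lra.
Qed.

Lemma nbhs_radius {V : normedModType R} {x : V} {P : V -> Prop} :
  (\forall y \near x, P y) -> exists2 r, 0 < r & forall y, `|x - y| < r -> P y.
Proof.
by move=> /nbhs_ballP[r r0 H]; exists r => // y hy; apply: H; rewrite -ball_normE.
Qed.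

(* With c, p, q constant it is
   grad g(q) . F(c, p); the mixed form is what coordinatewise mean value
   theorems produce. *)
Definition mixed_flux (g : vec -> R) (F : R * vec -> vec)
    (c : 'I_d -> R) (p q : 'I_d -> vec) : R :=
  \sum_(k < d) 'D_(ev k) g (q k) * F (c k, p k) ord0 k.

Definition transversal_window (U : set vec) (g : vec -> R) (F : R * vec -> vec)
    (ts : R) (xs : vec) (r C : R) : Prop :=
  [/\ 0 <= C,
      forall x, `|xs - x| < r -> U x,
      forall t x, `|ts - t| < r -> `|xs - x| < r -> `|F (t, x)| <= C &
      forall c p q, (forall k, `|ts - c k| < r) -> (forall k, `|xs - p k| < r) ->
        (forall k, `|xs - q k| < r) -> 0 < mixed_flux g F c p q].

Lemma transversal_window_exists {U : set vec} {g : vec -> R} {F : R * vec -> vec}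
    {ts : R} {xs : vec} :
  open U -> U xs -> C2_on U g -> {for (ts, xs), continuous F} ->
  0 < dotv (grad g xs) (F (ts, xs)) ->
  exists r C : R, 0 < r /\ transversal_window U g F ts xs r C.
Proof.
move=> Uo Uxs hg Fc flux.
pose A (k : 'I_d) : R := F (ts, xs) ord0 k.
pose B (k : 'I_d) : R := 'D_(ev k) g xs.
have sumBA : 0 < \sum_(k < d) B k * A k.
  by move: flux; rewrite /dotv; under eq_bigr do rewrite mxE.
have [eta eta0 hpert] := @perturbed_sum_gt0 A B sumBA.
have [_ gd _] := hg xs Uxs.
have nearX : \forall x \near xs, U x /\ forall k, `|B k - 'D_(ev k) g x| < eta.
  near=> x; split; first by near: x; apply: open_nbhs_nbhs.
  near: x; apply: (@filter_forall _ _ _ _ (nbhs_filter xs)) => k.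
  exact: (cvgr_dist_lt _ _ (gd k).2 eta eta0).
have min0 : 0 < Num.min eta 1 by rewrite lt_min eta0 ltr01.
have [r1 r10 H1] := nbhs_radius nearX.
have [r2 r20 H2] := nbhs_radius (cvgr_dist_lt _ _ Fc _ min0).
pose r := Num.min r1 r2.
have near_F t x : `|ts - t| < r -> `|xs - x| < r -> `|F (ts, xs) - F (t, x)| < Num.min eta 1.
  have r_r2 : r <= r2 by rewrite ge_min lexx orbT.
  move=> ht hx; apply: H2; rewrite prod_normE /= gt_max.
  by rewrite (lt_le_trans ht) ?(lt_le_trans hx).
have near_X x : `|xs - x| < r -> U x /\ forall k, `|B k - 'D_(ev k) g x| < eta.
  by rewrite lt_min => /andP[hx _]; exact: H1.
exists r, (`|F (ts, xs)| + 1); split; first by rewrite lt_min r10 r20.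
split => [||t x ht hx|c p q hc hp hq].
- by rewrite addr_ge0.
- by move=> x /near_X[].
- have := ler_normB (F (ts, xs)) (F (ts, xs) - F (t, x)).
  rewrite opprB addrCA subrr addr0 => le.
  apply: (le_trans le); rewrite lerD2l; apply: ltW; apply: lt_le_trans (near_F t x ht hx) _.
  by rewrite ge_min lexx orbT.
- apply: hpert => k.
    rewrite distrC; apply: le_trans (entry_dist _ _ _ _) _.
    by apply: ltW; apply: lt_le_trans (near_F _ _ (hc k) (hp k)) _; rewrite ge_min lexx.
  by rewrite distrC; apply: ltW; have [_] := near_X _ (hq k); apply.
Unshelve. all: by end_near.
Qed.

Section Increment.
Variables (U : set vec) (g : vec -> R) (F : R * vec -> vec) (ts : R) (xs : vec) (r C : R).
Hypothesis hg : C2_on U g.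
Hypothesis hwin : transversal_window U g F ts xs r C.

Lemma window_increment (z y : vec) (h : R) (c : 'I_d -> R) (p : 'I_d -> vec) :
  0 < h -> `|xs - z| < r -> `|xs - y| < r ->
  (forall k, `|ts - c k| < r) -> (forall k, `|xs - p k| < r) ->
  (forall k, y ord0 k - z ord0 k = h * F (c k, p k) ord0 k) ->
  g z < g y.
Proof.
move=> h0 hz hy hc hp disp.
have [_ Uball _ hflux] := hwin.
pose rho := Num.max `|xs - z| `|xs - y|.
have box_ball w : in_box z y w -> `|xs - w| < r.
  move=> hw; apply: (@le_lt_trans _ _ rho); last by rewrite gt_max hz hy.
  apply: mxnorm_le => [|i j]; first by rewrite le_max normr_ge0.
  rewrite (ord1 i) !mxE; apply: betweenr_dist (hw j) _ _.
    by apply: le_trans (entry_dist _ _ _ _) _; rewrite le_max lexx.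
  by apply: le_trans (entry_dist _ _ _ _) _; rewrite le_max lexx orbT.
have box_reg w : in_box z y w -> (forall k, derivable g w (ev k)) /\ {for w, continuous g}.
  by move=> /box_ball /Uball /hg[gc gd _]; split => // k; exact: (gd k).1.
have [xi [hxi E]] := @partials_mvt _ _ g z y box_reg.
have flux_pos : 0 < h * mixed_flux g F c p xi.
  by rewrite mulr_gt0 // hflux // => k; exact: box_ball.
rewrite -subr_gt0 E (_ : \sum_(k < d) _ = h * mixed_flux g F c p xi) //.
by rewrite /mixed_flux mulr_sumr; apply: eq_bigr => k _; rewrite disp; ring.
Qed.

End Increment.
End Transversality.

Section Crossing.
Context {R : realType} {d : nat}.
Local Notation vec := 'rV[R]_d.

Variables (a b : R) (U : set vec) (g : vec -> R) (fp fm : R -> vec -> vec)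
  (X : R -> vec -> R -> vec) (F : R * vec -> vec) (ts : R) (xs : vec) (r C eps : R).
Hypothesis hg : C2_on U g.
Hypothesis hX : forall y s, `]a, b[%classic s -> U y ->
  pws_solution `]a, b[%classic U g fp fm (fun t => X t y s) /\ X s y s = y.
Hypothesis hXback : forall y s, `]a, b[%classic s -> Ssurf U g y ->
  \forall t \near s^'-, Uminus U g (X t y s).
Hypothesis hF : forall t x, `]a, b[%classic t -> Uminus U g x -> F (t, x) = fm t x.
Hypothesis hwin : transversal_window U g F ts xs r C.
Hypothesis eps0 : 0 < eps.
Hypothesis window_left : a < ts - eps.
Hypothesis window_right : ts < b.
Hypothesis eps_small : (C + 1) * eps < r.

Definition lower_ball (x : vec) : Prop := g x < 0 /\ `|xs - x| < r.

Lemma eps_lt_r : eps < r.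
Proof.
have [C0 _ _ _] := hwin; have := mulr_ge0 C0 (ltW eps0).
by have := eps_small; rewrite mulrDl mul1r; lra.
Qed.

Lemma window_time (t : R) : ts - eps <= t <= ts -> `]a, b[%classic t /\ `|ts - t| < r.
Proof.
move=> /andP[t1 t2]; have er := eps_lt_r; have wl := window_left; have wr := window_right.
split; first by rewrite /= in_itv /=; apply/andP; split; lra.
by rewrite ger0_norm ?subr_ge0 //; lra.
Qed.

Section Trajectory.
Variables (y : vec) (s : R).
Hypothesis sI : `]a, b[%classic s.
Hypothesis Uy : U y.
Local Notation x := (fun t => X t y s).

(* In the lower half ball the trajectory is not at a transition, so it
   follows the field F (which agrees with f_- there). *)
Lemma lower_ball_velocity (u : R) : `]a, b[%classic u -> lower_ball (x u) ->
  derivable x u 1 /\ derive1 x u = F (u, x u).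
Proof.
move=> uI [gu du]; have [[_ hode _ _ _] _] := hX y s sI Uy.
have [_ Uball _ _] := hwin.
have xu_minus : Uminus U g (x u) by split => //; exact: Uball.
have [|dx [_ hm]] := hode u uI; first by move=> [_ [_ g0]]; rewrite g0 ltxx in gu.
by split => //; rewrite hm // hF.
Qed.

Lemma lower_ball_open (t : R) : `]a, b[%classic t -> lower_ball (x t) ->
  \forall u \near t, lower_ball (x u).
Proof.
move=> tI [gt dt]; have [[hcont _ _ _ _] _] := hX y s sI Uy.
have [Ut ct] := hcont t tI; have [gc _ _] := hg _ Ut.
have gxc : {for t, continuous (g \o x)} := continuous_comp ct gc.
have gap : 0 < r - `|xs - x t| by rewrite subr_gt0.
near=> u; split; first by near: u; exact: cvgr_lt _ gxc _ gt.
have : `|x t - x u| < r - `|xs - x t| by near: u; exact: cvgr_dist_lt _ _ ct _ gap.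
by have := ler_distD (x t) xs (x u); lra.
Unshelve. all: by end_near.
Qed.

Lemma lower_ball_before : `|xs - y| <= eps -> g y = 0 ->
  \forall u \near s^'-, lower_ball (x u).
Proof.
move=> hy gy; have [[hcont _ _ _ _] xss] := hX y s sI Uy.
have [_ cs] := hcont s sI.
have minus := hXback y s sI (conj Uy gy); rewrite near_withinE in minus.
have gap : 0 < r - eps by rewrite subr_gt0 eps_lt_r.
rewrite near_withinE; near=> u => us; split.
  have : u < s -> Uminus U g (x u) by near: u; exact: minus.
  by move=> /(_ us) [].
have : `|x s - x u| < r - eps by near: u; exact: cvgr_dist_lt _ _ cs _ gap.
by rewrite xss => h; have := ler_distD y xs (x u); lra.
Unshelve. all: by end_near.
Qed.

(* By the
   mean value theorem x(s) - x(t0) is (s - t0) times values of F, which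
   keeps x(t0) in the ball and, by transversality, makes g increase from
   x(t0) to x(s) = y on S. *)
Lemma lower_ball_last (t0 : R) : `|xs - y| <= eps -> g y = 0 ->
  ts - eps <= t0 < s -> s <= ts ->
  (forall u, t0 < u < s -> lower_ball (x u)) -> lower_ball (x t0).
Proof.
move=> hy gy /andP[t0_1 t0s] s_2 inside.
have [[hcont _ _ _ _] xss] := hX y s sI Uy.
have [C0 _ Fbound _] := hwin.
have win (u : R) : t0 <= u <= s -> `]a, b[%classic u /\ `|ts - u| < r.
  by move=> /andP[u1 u2]; apply: window_time; apply/andP; split; lra.
have vel (u : R) : t0 < u < s -> derivable x u 1 /\ derive1 x u = F (u, x u).
  move=> /[dup] /andP[u1 u2] /inside; apply: lower_ball_velocity.
  by apply: (fun h => (win u h).1); rewrite !ltW.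
have coord k : exists c, t0 < c < s /\
    y ord0 k - x t0 ord0 k = (s - t0) * F (c, x c) ord0 k.
  have [c hc E] := @coord_mvt _ _ x t0 s k t0s (fun u hu => (vel u hu).1)
    (fun u hu => (hcont u (win u hu).1).2).
  by exists c; split => //; move: E; rewrite xss (vel c hc).2 mulrC.
have /fin_all_exists [c hc] := coord.
have c_win k : `|ts - c k| < r /\ `|xs - x (c k)| < r.
  have [/andP[c1 c2] _] := hc k; split; last by have [] := inside _ (hc k).1.
  by apply: (fun h => (win (c k) h).2); rewrite !ltW.
have dist_t0 : `|xs - x t0| < r.
  apply: le_lt_trans eps_small; apply: mxnorm_le => [|i j].
    by rewrite mulr_ge0 ?addr_ge0 // ltW.
  rewrite (ord1 i) !mxE; have [_ E] := hc j.
  have step : `|y ord0 j - x t0 ord0 j| <= C * eps.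
    rewrite E normrM ger0_norm ?subr_ge0 ?(ltW t0s) // mulrC.
    apply: ler_pM; [exact: normr_ge0 | by rewrite subr_ge0 ltW | | lra].
    exact: le_trans (mxnorm_entry _ ord0 j) (Fbound _ _ (c_win j).1 (c_win j).2).
  have := ler_distD (y ord0 j) (xs ord0 j) (x t0 ord0 j).
  have := le_trans (entry_dist xs y ord0 j) hy.
  rewrite mulrDl mul1r; lra.
split => //; rewrite -gy.
have h0 : 0 < s - t0 by rewrite subr_gt0.
apply: (@window_increment _ _ U g F ts xs r C hg hwin (x t0) y (s - t0) c
  (fun k => x (c k)) h0 dist_t0).
- exact: le_lt_trans hy eps_lt_r.
- by move=> k; have [] := c_win k.
- by move=> k; have [] := c_win k.
- by move=> k; have [_ ->] := hc k.
Qed.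

End Trajectory.

Lemma stays_in_lower_ball (y : vec) (s : R) : `|xs - y| <= eps -> Ssurf U g y ->
  ts - eps < s <= ts -> forall tau : R, ts - eps <= tau < s -> lower_ball (X tau y s).
Proof.
move=> hy [Uy gy] /andP[s1 s2] tau tau_win; apply: contrapT => out.
have [sI _] := window_time s (ltac:(by rewrite s2 andbT ltW)).
have Popen (t : R) : ts - eps <= t < s ->
    lower_ball (X t y s) -> \forall u \near t, lower_ball (X u y s).
  move=> /andP[t1 ts']; apply: (lower_ball_open y s sI Uy t).
  by apply: (window_time t _).1; rewrite t1 /= ltW // (lt_le_trans ts').
have [t0 [t0_win out_t0 inside]] :=
  @last_failure _ (fun u => lower_ball (X u y s)) (ts - eps) s tau tau_win out
    (lower_ball_before y s sI Uy hy gy) Popen.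
by apply: out_t0; apply: lower_ball_last.
Qed.

End Crossing.

Arguments stays_in_lower_ball {R d a b U g fp fm X F ts xs r C eps}.

(* A window length eps fitting in I to the left of ts and such that a
   trajectory with speed at most C moves less than r - eps in time eps. *)
Lemma window_length_exists {R : realType} {a ts r C : R} :
  a < ts -> 0 < r -> 0 <= C ->
  exists eps, [/\ 0 < eps, a < ts - eps & (C + 1) * eps < r].
Proof.
move=> ats r0 C0; have C2 : 0 < C + 2 by rewrite ltr_wpDl.
pose eps := Num.min (r / (C + 2)) ((ts - a) / 2).
have eps_r : eps <= r / (C + 2) by rewrite ge_min lexx.
have eps_a : eps <= (ts - a) / 2 by rewrite ge_min lexx orbT.
exists eps; split; first by rewrite lt_min !divr_gt0 // subr_gt0.
  by lra.
apply: le_lt_trans (_ : (C + 1) * (r / (C + 2)) < r).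
  by apply: ler_wpM2l; rewrite ?addr_ge0.
by rewrite mulrA ltr_pdivrMr //; nra.
Qed.

Theorem lemmaB2 (R : realType) (d : nat)
  (* bounded open time interval I = ]a, b[ *)
  (a b : R) (hab : a < b)
  (* bounded open state space U *)
  (U : set 'rV[R]_d) (hUo : open U) (hUb : bounded_set U)
  (* switching function *)
  (g : 'rV[R]_d -> R) (hg : C2_on U g) (hgrad : forall x, U x -> grad g x != 0)
  (* vector fields *)
  (fp fm : R -> 'rV[R]_d -> 'rV[R]_d)
  (hfp : C1_on_closure `]a, b[%classic (Uplus U g `|` Ssurf U g) fp)
  (hfm : C1_on_closure `]a, b[%classic (Uminus U g `|` Ssurf U g) fm)
  (* transversality on I x S *)
  (alphaS : R) (halpha : alphaS != 0)
  (htrans : forall t x, `]a, b[%classic t -> Ssurf U g x ->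
     alphaS ^+ 2 <= dotv (grad g x) (fp t x) /\
     alphaS ^+ 2 <= dotv (grad g x) (fm t x))
  (* the PWS solutions x(t; y, s) *)
  (X : R -> 'rV[R]_d -> R -> 'rV[R]_d)
  (hX : forall y s, `]a, b[%classic s -> U y ->
     pws_solution `]a, b[%classic U g fp fm (fun t => X t y s) /\ X s y s = y)
  (hXback : forall y s, `]a, b[%classic s -> Ssurf U g y ->
     \forall t \near s^'-, Uminus U g (X t y s))
  (* Lipschitz continuity in the initial data *)
  (hLip : exists L : R, forall t s y1 y2, `]a, b[%classic t -> `]a, b[%classic s -> U y1 -> U y2 ->
     `|X t y1 s - X t y2 s| <= L * `|y1 - y2|)
  (* the point (t_star, x_star) in I x S *)
  (ts : R) (xs : 'rV[R]_d) (hts : `]a, b[%classic ts) (hxs : Ssurf U g xs) :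
  exists eps : R, 0 < eps /\
    let K := closed_ball xs eps `&` Ssurf U g in
    let J := [set p : R * R | p.1 \in `[ts - eps, ts] /\ p.2 \in `[ts - eps, ts]
                               /\ p.1 < p.2] in
    (forall y t s, K y -> J (t, s) ->
       forall tau, ts - eps <= tau < s -> ~ Ssurf U g (X tau y s)) /\
    let M := ((1/2)%:E * ereal_sup
               [set z | exists t s y, [/\ J (t, s), K y &
                  z = (`| second_deriv_g g (fun u => X u y s) t |)%:E]])%E in
    forall y t s, K y -> J (t, s) ->
      (Order.max (ts - eps - s)%:E (- (alphaS ^+ 2)%:E / M) < (t - s)%:E)%E ->
      t - s < 0 ->
      g (X t y s) < 0.
Proof.
have [Uxs _] := hxs; have [ats tsb] : a < ts /\ ts < b by move: hts; rewrite /= in_itv => /andP.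
(* F: the C^1 extension of f_- around I x (U_- u S) *)
have [V [F [Vo Vin FC1 Feq]]] := hfm.
have [Fc _ _] := FC1 _ (Vin ts xs hts (or_intror hxs)).
have hF t x : `]a, b[%classic t -> Uminus U g x -> F (t, x) = fm t x.
  by move=> tI xm; apply: Feq => //; left.
have flux : 0 < dotv (grad g xs) (F (ts, xs)).
  rewrite Feq //; last by right.
  by apply: lt_le_trans (htrans ts xs hts hxs).2; rewrite lt0r sqr_ge0 andbT expf_neq0.
have [r [C [r0 hwin]]] := transversal_window_exists hUo Uxs hg Fc flux.
have [C0 _ _ _] := hwin.
have [eps [eps0 wl small]] := window_length_exists ats r0 C0.
have below := stays_in_lower_ball hg hX hXback hF hwin eps0 wl tsb small.
exists eps; split => // K J.
have unpack y t s : K y -> J (t, s) ->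
    [/\ `|xs - y| <= eps, Ssurf U g y, ts - eps < s <= ts & ts - eps <= t < s].
  rewrite /K /J /= closed_ballE // !in_itv /= => -[hy Sy] [/andP[t1 t2] [/andP[s1 s2] ts']].
  by split => //; apply/andP; split => //; lra.
split.
- move=> y t s Ky Jts tau tau_win [_ gtau].
  have [hy Sy hs _] := unpack y t s Ky Jts.
  by have [] := below y s hy Sy hs tau tau_win; rewrite gtau ltxx.
- move=> M y t s Ky Jts _ _; have [hy Sy hs ht] := unpack y t s Ky Jts.
  by have [] := below y s hy Sy hs t ht.
Qed.
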